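(* Let $k\ge1$ and let $A_1,\dots,A_n$ be independent events with probabilities $1\ge u_1\ge u_2\ge\dots\ge u_n\ge0$. Then \[ \mathbf{P}\big(\{A_i\}_{i=1}^n\text{ has no }k\text{-gaps}\big)\;\le\;\prod_{i=1}^{n-k+1}f_k(1-u_i), \] an empty product being $1$.
   Context: For an integer $k\ge1$, $f_k:[0,1]\to[0,1]$ denotes the unique decreasing function satisfying $f_k(x)^k-f_k(x)^{k+1}=x^k-x^{k+1}$ for all $x\in[0,1]$; it is continuous with $f_k(0)=1$, $f_k(1)=0$. A sequence of events $A_1,\dots,A_n$ has a $k$-gap if there is an index $i$ with $i+k-1\le n$ such that none of $A_i,\dots,A_{i+k-1}$ occurs. *)

From Stdlib Require Import Reals List Arith.
Import ListNotations.
Open Scope R_scope.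

(* All outcomes (omega_0,...,omega_{n-1}) in {true,false}^n; omega_i = true
   means that the event A_{i+1} occurs. *)
Fixpoint bool_lists (n : nat) : list (list bool) :=
  match n with
  | O => [nil]
  | S m => map (cons true) (bool_lists m) ++ map (cons false) (bool_lists m)
  end.

(* Probability of the outcome w under the product law of independent events
   with P(A_{i+1}) = u i, starting at index i. *)
Fixpoint weight_from (u : nat -> R) (i : nat) (w : list bool) : R :=
  match w with
  | nil => 1
  | b :: t => (if b then u i else 1 - u i) * weight_from u (S i) t
  end.

(* w has a k-gap: some window of k consecutive positions i..i+k-1
   (with i + k <= length w) in which no event occurs. *)
Definition kgapb (k : nat) (w : list bool) : bool :=
  existsb (fun i => forallb (fun j => negb (nth j w true)) (seq i k))
          (seq 0 (S (length w) - k)).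

Definition prob_no_kgap (k n : nat) (u : nat -> R) : R :=
  fold_right Rplus 0
    (map (fun w => if kgapb k w then 0 else weight_from u 0 w) (bool_lists n)).

(* prod_{i=1}^{n-k+1} f(1 - u_i)  (0-based: i = 0 .. n-k), empty product = 1. *)
Definition gap_bound (f : R -> R) (k n : nat) (u : nat -> R) : R :=
  fold_right Rmult 1 (map (fun i => f (1 - u i)) (seq 0 (S n - k))).

From Stdlib Require Import Reals List Arith Lia Lra Psatz.
Import ListNotations.
Open Scope R_scope.

(* Let P(L, c) be the probability that the first L events, followed by c
   certain failures, have no k-gap; then P(L+1, c) = u_L P(L, 0) + (1 - u_L) P(L, c+1)
   and P(n, 0) is the probability to bound.  Let B(L) be the bound for the first L
   events, Q = 1 - u_(L+c-k) the failure probability of the first event of the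
   last k-window of the padded word, and λ = f Q.  By induction on L,
       λ^k P(L, c) ≤ ρ_(k-c)(Q) B(L + c),    ρ_j(Q) = (1 - Q) Σ_(i<j) λ^i Q^(j-1-i):
   ρ satisfies the recursion of P with every failure probability equal to Q, while
   the u_i decrease, so the actual failure probabilities are at least Q and each
   window passed on the way contributes a factor at least λ to B.  The identity
   defining f gives ρ_k(Q) = λ^k unless λ = Q, and then Q ≥ k/(k+1), the maximiser
   of x^k - x^(k+1), which again gives ρ_k(Q) ≤ λ^k; so c = 0 yields P(L, 0) ≤ B(L). *)

Definition sum_words (F : list bool -> R) (L : nat) : R :=
  fold_right Rplus 0 (map F (bool_lists L)).

Lemma fold_right_Rplus_app (l1 l2 : list R) :
  fold_right Rplus 0 (l1 ++ l2) = fold_right Rplus 0 l1 + fold_right Rplus 0 l2.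
Proof. induction l1 as [|x l1 IH]; simpl; [ring | rewrite IH; ring]. Qed.

Lemma fold_right_Rmult_snoc (l : list R) (x : R) :
  fold_right Rmult 1 (l ++ [x]) = fold_right Rmult 1 l * x.
Proof. induction l as [|y l IH]; simpl; [ring | rewrite IH; ring]. Qed.

Lemma sum_words_0 (F : list bool -> R) : sum_words F 0 = F [].
Proof. unfold sum_words; simpl; ring. Qed.

Lemma sum_words_S (F : list bool -> R) (L : nat) :
  sum_words F (S L) =
  sum_words (fun w => F (true :: w)) L + sum_words (fun w => F (false :: w)) L.
Proof.
  unfold sum_words; simpl.
  rewrite map_app, fold_right_Rplus_app, !map_map; reflexivity.
Qed.

Lemma sum_words_snoc (F : list bool -> R) (L : nat) :
  sum_words F (S L) =
  sum_words (fun w => F (w ++ [true])) L + sum_words (fun w => F (w ++ [false])) L.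
Proof.
  revert F; induction L as [|L IH]; intros F.
  - rewrite sum_words_S, !sum_words_0; reflexivity.
  - rewrite sum_words_S, (IH (fun w => F (true :: w))), (IH (fun w => F (false :: w))).
    rewrite (sum_words_S (fun w => F (w ++ [true]))), (sum_words_S (fun w => F (w ++ [false]))).
    simpl; ring.
Qed.

Lemma sum_words_ext (F G : list bool -> R) (L : nat) :
  (forall w, length w = L -> F w = G w) -> sum_words F L = sum_words G L.
Proof.
  revert F G; induction L as [|L IH]; intros F G HFG.
  - rewrite !sum_words_0; apply HFG; reflexivity.
  - rewrite !sum_words_S; f_equal; apply IH; intros w Hw; apply HFG; simpl; lia.
Qed.

Lemma sum_words_scal (a : R) (F : list bool -> R) (L : nat) :
  sum_words (fun w => a * F w) L = a * sum_words F L.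
Proof.
  revert F; induction L as [|L IH]; intros F.
  - rewrite !sum_words_0; reflexivity.
  - rewrite !sum_words_S, (IH (fun w => F (true :: w))), (IH (fun w => F (false :: w))); ring.
Qed.

Lemma weight_from_snoc (u : nat -> R) (i : nat) (w : list bool) (b : bool) :
  weight_from u i (w ++ [b]) =
  weight_from u i w * (if b then u (i + length w)%nat else 1 - u (i + length w)%nat).
Proof.
  revert i; induction w as [|a w IH]; intros i; simpl.
  - rewrite Nat.add_0_r; ring.
  - rewrite IH; replace (S i + length w)%nat with (i + S (length w))%nat by lia; ring.
Qed.

Lemma kgapb_spec (k : nat) (w : list bool) :
  kgapb k w = true <->
  exists i, (i + k <= length w)%nat /\
            forall j, (i <= j < i + k)%nat -> nth j w true = false.
Proof.
  unfold kgapb; rewrite existsb_exists; split.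
  - intros [i [Hi Hwin]]; apply in_seq in Hi; rewrite forallb_forall in Hwin.
    exists i; split; [lia |].
    intros j Hj; specialize (Hwin j (proj2 (in_seq _ _ _) Hj)).
    destruct (nth j w true); [discriminate | reflexivity].
  - intros [i [Hi Hwin]]; exists i; split; [apply in_seq; lia |].
    apply forallb_forall; intros j Hj; apply in_seq in Hj.
    rewrite Hwin by lia; reflexivity.
Qed.

Lemma kgapb_app_true_repeat (k c : nat) (w : list bool) :
  (c < k)%nat -> kgapb k (w ++ true :: repeat false c) = kgapb k w.
Proof.
  intros Hc; apply Bool.eq_iff_eq_true; rewrite !kgapb_spec.
  rewrite length_app; simpl; rewrite repeat_length; split.
  - intros [i [Hi Hwin]].
    assert (Hiw : (i + k <= length w)%nat).
    { destruct (Nat.le_gt_cases (i + k) (length w)) as [|Hgt]; [assumption |].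
      specialize (Hwin (length w) ltac:(lia)); rewrite nth_middle in Hwin; discriminate. }
    exists i; split; [exact Hiw |].
    intros j Hj; rewrite <- (app_nth1 w (true :: repeat false c)) by lia; auto.
  - intros [i [Hi Hwin]]; exists i; split; [lia |].
    intros j Hj; rewrite app_nth1 by lia; auto.
Qed.

Lemma kgapb_app_repeat_long (k c : nat) (w : list bool) :
  (k <= c)%nat -> kgapb k (w ++ repeat false c) = true.
Proof.
  intros Hkc; apply kgapb_spec; exists (length w + (c - k))%nat.
  rewrite length_app, repeat_length; split; [lia |].
  intros j Hj; rewrite app_nth2 by lia; apply nth_repeat_lt; lia.
Qed.

Lemma kgapb_repeat_short (k c : nat) : (c < k)%nat -> kgapb k (repeat false c) = false.
Proof.
  intros Hc; destruct (kgapb k (repeat false c)) eqn:E; [| reflexivity].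
  apply kgapb_spec in E; destruct E as [i [Hi _]]; rewrite repeat_length in Hi; lia.
Qed.

Definition prob_no_kgap_padded (k L c : nat) (u : nat -> R) : R :=
  sum_words (fun w => if kgapb k (w ++ repeat false c) then 0 else weight_from u 0 w) L.

Section Padded.

Variables (k : nat) (u : nat -> R).

Lemma prob_no_kgap_padded_0 (L : nat) : prob_no_kgap_padded k L 0 u = prob_no_kgap k L u.
Proof.
  apply sum_words_ext; intros w _; simpl; rewrite app_nil_r; reflexivity.
Qed.

Lemma prob_no_kgap_padded_long (L c : nat) : (k <= c)%nat -> prob_no_kgap_padded k L c u = 0.
Proof.
  intros Hkc; transitivity (sum_words (fun _ => 0 * 0) L).
  - apply sum_words_ext; intros w _; rewrite kgapb_app_repeat_long by exact Hkc; ring.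
  - rewrite sum_words_scal; ring.
Qed.

Lemma prob_no_kgap_padded_S (L c : nat) : (c < k)%nat ->
  prob_no_kgap_padded k (S L) c u =
  u L * prob_no_kgap_padded k L 0 u + (1 - u L) * prob_no_kgap_padded k L (S c) u.
Proof.
  intros Hc; unfold prob_no_kgap_padded; rewrite sum_words_snoc, <- !sum_words_scal.
  f_equal; apply sum_words_ext; intros w Hw; rewrite weight_from_snoc, Hw, <- app_assoc; simpl.
  - rewrite kgapb_app_true_repeat, app_nil_r by exact Hc.
    destruct (kgapb k w); ring.
  - destruct (kgapb k (w ++ false :: repeat false c)); ring.
Qed.

Lemma prob_no_kgap_padded_short (L c : nat) :
  (L + c < k)%nat -> prob_no_kgap_padded k L c u = 1.
Proof.
  revert c; induction L as [|L IH]; intros c Hc.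
  - unfold prob_no_kgap_padded; rewrite sum_words_0; simpl.
    rewrite kgapb_repeat_short by lia; reflexivity.
  - rewrite prob_no_kgap_padded_S, !IH by lia; ring.
Qed.

Lemma prob_no_kgap_padded_sure_gap (L c : nat) :
  (k <= L + c)%nat -> (forall i, (L + c - k <= i < L)%nat -> u i = 0) ->
  prob_no_kgap_padded k L c u = 0.
Proof.
  revert c; induction L as [|L IH]; intros c Hk Hu.
  - apply prob_no_kgap_padded_long; lia.
  - destruct (le_lt_dec k c) as [Hkc | Hc]; [apply prob_no_kgap_padded_long, Hkc |].
    rewrite prob_no_kgap_padded_S, (Hu L), (IH (S c)) by (lia || (intros; apply Hu; lia)); ring.
Qed.

End Padded.

Fixpoint geom_sum (a b : R) (j : nat) : R :=
  match j with
  | O => 0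
  | S j' => a ^ j' + b * geom_sum a b j'
  end.

Lemma geom_sum_mul_sub (a b : R) (j : nat) : (a - b) * geom_sum a b j = a ^ j - b ^ j.
Proof.
  induction j as [|j IH]; simpl; [ring |].
  replace ((a - b) * (a ^ j + b * geom_sum a b j))
    with ((a - b) * a ^ j + b * ((a - b) * geom_sum a b j)) by ring.
  rewrite IH; ring.
Qed.

Lemma geom_sum_Sr (a b : R) (j : nat) : geom_sum a b (S j) = b ^ j + a * geom_sum a b j.
Proof.
  induction j as [|j IH]; [simpl; ring |].
  change (geom_sum a b (S (S j))) with (a ^ S j + b * geom_sum a b (S j)).
  rewrite IH at 1; simpl; ring.
Qed.

Lemma geom_sum_diag (a : R) (j : nat) : geom_sum a a (S j) = INR (S j) * a ^ j.
Proof.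
  induction j as [|j IH]; [simpl; ring |].
  change (geom_sum a a (S (S j))) with (a ^ S j + a * geom_sum a a (S j)).
  rewrite IH, (S_INR (S j)); simpl; ring.
Qed.

Lemma pow_mul_geom_sum_le (a b : R) (j d : nat) :
  0 <= a -> 0 <= b -> a ^ d * geom_sum a b j <= geom_sum a b (j + d).
Proof.
  intros Ha Hb; revert j; induction d as [|d IH]; intros j.
  - rewrite Nat.add_0_r; simpl; lra.
  - rewrite <- Nat.add_succ_comm.
    apply Rle_trans with (a ^ d * geom_sum a b (S j)); [| apply IH].
    rewrite geom_sum_Sr; simpl.
    assert (0 <= a ^ d) by (apply pow_le; exact Ha).
    assert (0 <= b ^ j) by (apply pow_le; exact Hb).
    nra.
Qed.

(* AM-GM for k copies of t and one copy of k + 1 - k t; the expression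
   decreases in k by (k + 1) t^k (1 - t)^2 and equals 1 - (1 - t)^2 at k = 1. *)
Lemma pow_mul_affine_lt_1 (k : nat) (t : R) :
  (1 <= k)%nat -> 0 <= t < 1 -> t ^ k * (INR k + 1 - INR k * t) < 1.
Proof.
  intros Hk Ht.
  assert (Hbound : forall m, t ^ S m * (INR (S m) + 1 - INR (S m) * t) <= 1 - (1 - t) ^ 2).
  { induction m as [|m IH]; [simpl; lra |].
    assert (Hdec : t ^ S (S m) * (INR (S (S m)) + 1 - INR (S (S m)) * t)
                   = t ^ S m * (INR (S m) + 1 - INR (S m) * t)
                     - (INR (S m) + 1) * t ^ S m * (1 - t) ^ 2).
    { rewrite (S_INR (S m)); simpl; ring. }
    assert (0 <= (INR (S m) + 1) * t ^ S m * (1 - t) ^ 2).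
    { apply Rmult_le_pos; [apply Rmult_le_pos; [pose proof (pos_INR (S m)); lra |] |];
        apply pow_le; lra. }
    lra. }
  destruct k as [|k]; [lia |].
  specialize (Hbound k); nra.
Qed.

Lemma pow_sub_pow_succ_lt (k : nat) (y : R) :
  (1 <= k)%nat -> 0 <= y -> y * (INR k + 1) < INR k ->
  y ^ k - y ^ S k < (INR k / (INR k + 1)) ^ k - (INR k / (INR k + 1)) ^ S k.
Proof.
  intros Hk Hy Hyk.
  set (K := INR k) in *; set (c := K / (K + 1)).
  assert (HK : 1 <= K) by (apply (le_INR 1); exact Hk).
  assert (Hc : c * (K + 1) = K) by (unfold c; field; lra).
  assert (Hc01 : 0 < c < 1) by (split; nra).
  set (t := y / c).
  assert (Hyt : y = c * t) by (unfold t; field; lra).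
  assert (Ht : 0 <= t < 1).
  { split; [unfold t; apply Rmult_le_pos; [| apply Rlt_le, Rinv_0_lt_compat]; lra |].
    rewrite Hyt in Hyk; nra. }
  assert (Hfactor : y ^ k - y ^ S k = (c ^ k - c ^ S k) * (t ^ k * (K + 1 - K * t))).
  { rewrite Hyt; simpl; rewrite Rpow_mult_distr.
    apply Rminus_diag_uniq.
    replace (c ^ k * t ^ k - c * t * (c ^ k * t ^ k)
             - (c ^ k - c * c ^ k) * (t ^ k * (K + 1 - K * t)))
      with ((c * (K + 1) - K) * (1 - t) * c ^ k * t ^ k) by ring.
    rewrite Hc; ring. }
  assert (Hmax : 0 < c ^ k - c ^ S k).
  { simpl; assert (0 < c ^ k) by (apply pow_lt; lra); nra. }
  rewrite Hfactor.
  pose proof (pow_mul_affine_lt_1 k t Hk Ht) as Hamgm; fold K in Hamgm.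
  nra.
Qed.

Section Potential.

Variables (k : nat) (f : R -> R).
Hypothesis hk : (1 <= k)%nat.
Hypothesis hf_range : forall x, 0 <= x <= 1 -> 0 <= f x <= 1.
Hypothesis hf_dec : forall x y, 0 <= x -> x < y -> y <= 1 -> f y < f x.
Hypothesis hf_eq : forall x, 0 <= x <= 1 -> f x ^ k - f x ^ (S k) = x ^ k - x ^ (S k).

Lemma f_antimono (x y : R) : 0 <= x -> x <= y -> y <= 1 -> f y <= f x.
Proof.
  intros Hx Hxy Hy; destruct (Rle_lt_or_eq_dec x y Hxy) as [Hlt | <-]; [| lra].
  left; apply hf_dec; assumption.
Qed.

Lemma f_eq_0 (Q : R) : 0 <= Q <= 1 -> f Q = 0 -> Q = 1.
Proof.
  intros HQ Hf0.
  assert (Hroot : Q ^ k * (1 - Q) = 0).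
  { pose proof (hf_eq Q HQ) as E; rewrite Hf0, !pow_i in E by lia; simpl in E; lra. }
  destruct (Rmult_integral _ _ Hroot) as [HQk | HQ1]; [| lra].
  assert (Q = 0) as -> by (destruct (Req_dec Q 0); [assumption | contradict HQk; apply pow_nonzero; assumption]).
  pose proof (hf_dec 0 1 ltac:(lra) ltac:(lra) ltac:(lra)).
  pose proof (hf_range 1 ltac:(lra)).
  lra.
Qed.

(* A fixed point lies past the maximum k / (k + 1) of x^k - x^(k+1): otherwise
   f (k / (k + 1)) < Q < k / (k + 1) would take the same value of that function. *)
Lemma fixed_point_large (Q : R) : 0 <= Q <= 1 -> f Q = Q -> INR k * (1 - Q) <= Q.
Proof.
  intros HQ HfQ.
  destruct (Rle_lt_dec (INR k * (1 - Q)) Q) as [| Hsmall]; [assumption | exfalso].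
  set (c := INR k / (INR k + 1)).
  assert (HK : 1 <= INR k) by (apply (le_INR 1); exact hk).
  assert (Hc : c * (INR k + 1) = INR k) by (unfold c; field; lra).
  assert (HQc : Q < c) by nra.
  assert (Hfc : f c < Q) by (rewrite <- HfQ; apply hf_dec; nra).
  pose proof (hf_range c ltac:(nra)).
  pose proof (pow_sub_pow_succ_lt k (f c) hk ltac:(lra) ltac:(nra)) as Hlt.
  fold c in Hlt.
  pose proof (hf_eq c ltac:(nra)).
  lra.
Qed.

Definition rho (Q : R) (j : nat) : R := (1 - Q) * geom_sum (f Q) Q j.

Lemma rho_S (Q : R) (j : nat) : rho Q (S j) = (1 - Q) * f Q ^ j + Q * rho Q j.
Proof. unfold rho; simpl; ring. Qed.

Lemma rho_0 (Q : R) : rho Q 0 = 0.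
Proof. unfold rho; simpl; ring. Qed.

Lemma rho_k_le (Q : R) : 0 <= Q <= 1 -> rho Q k <= f Q ^ k.
Proof.
  intros HQ; unfold rho.
  destruct (Req_dec (f Q) Q) as [HfQ | HfQ].
  - pose proof (fixed_point_large Q HQ HfQ) as Hlarge.
    rewrite HfQ; replace k with (S (k - 1)) in Hlarge |- * by lia.
    rewrite geom_sum_diag.
    assert (0 <= (Q - INR (S (k - 1)) * (1 - Q)) * Q ^ (k - 1))
      by (apply Rmult_le_pos; [lra | apply pow_le; lra]).
    change (Q ^ S (k - 1)) with (Q * Q ^ (k - 1)); nra.
  - apply Req_le, (Rmult_eq_reg_l (f Q - Q)); [| lra].
    pose proof (hf_eq Q HQ) as E; simpl in E.
    rewrite <- Rmult_assoc, (Rmult_comm (f Q - Q)), Rmult_assoc, geom_sum_mul_sub.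
    simpl; nra.
Qed.

Lemma rho_le_pow (Q : R) (j : nat) : 0 <= Q <= 1 -> (j <= k)%nat -> rho Q j <= f Q ^ j.
Proof.
  intros HQ Hj; pose proof (hf_range Q HQ) as Hf.
  destruct (Rle_lt_or_eq_dec 0 (f Q) (proj1 Hf)) as [Hpos | Hf0].
  - apply (Rmult_le_reg_l (f Q ^ (k - j))); [apply pow_lt; exact Hpos |].
    rewrite <- pow_add, Nat.sub_add by exact Hj.
    apply Rle_trans with (rho Q k); [| apply rho_k_le, HQ].
    unfold rho; replace k with (j + (k - j))%nat at 2 by lia.
    pose proof (pow_mul_geom_sum_le (f Q) Q j (k - j) ltac:(lra) ltac:(lra)).
    nra.
  - assert (Q = 1) as -> by (apply f_eq_0; auto).
    unfold rho; rewrite Rminus_diag, Rmult_0_l; apply pow_le; lra.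
Qed.

End Potential.

Lemma gap_bound_short (f : R -> R) (k L : nat) (u : nat -> R) :
  (L < k)%nat -> gap_bound f k L u = 1.
Proof. intros HL; unfold gap_bound; replace (S L - k)%nat with 0%nat by lia; reflexivity. Qed.

Lemma gap_bound_S (f : R -> R) (k L : nat) (u : nat -> R) :
  (k <= S L)%nat -> gap_bound f k (S L) u = gap_bound f k L u * f (1 - u (S L - k)%nat).
Proof.
  intros HL; unfold gap_bound.
  replace (S (S L) - k)%nat with (S (S L - k)) by lia.
  rewrite seq_S, map_app; cbn [map]; rewrite fold_right_Rmult_snoc.
  reflexivity.
Qed.

Lemma affine_mix_le (p q a r x y b : R) :
  0 <= q -> 0 <= p <= 1 - q -> r <= a -> 0 <= b -> x <= a * b -> y <= r * b ->
  p * x + (1 - p) * y <= ((1 - q) * a + q * r) * b.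
Proof.
  intros Hq Hp Hra Hb Hx Hy.
  pose proof (Rmult_le_compat_l p _ _ ltac:(lra) Hx).
  pose proof (Rmult_le_compat_l (1 - p) _ _ ltac:(lra) Hy).
  assert (0 <= (1 - q - p) * (a - r) * b) by (apply Rmult_le_pos; [apply Rmult_le_pos |]; lra).
  nra.
Qed.

Section GapBound.

Variables (k n : nat) (u : nat -> R) (f : R -> R).
Hypothesis hk : (1 <= k)%nat.
Hypothesis hf_range : forall x, 0 <= x <= 1 -> 0 <= f x <= 1.
Hypothesis hf_dec : forall x y, 0 <= x -> x < y -> y <= 1 -> f y < f x.
Hypothesis hf_eq : forall x, 0 <= x <= 1 -> f x ^ k - f x ^ (S k) = x ^ k - x ^ (S k).
Hypothesis hu_range : forall i, (i < n)%nat -> 0 <= u i <= 1.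
Hypothesis hu_mono : forall i, (S i < n)%nat -> u (S i) <= u i.

Lemma u_antimono (i j : nat) : (i <= j)%nat -> (j < n)%nat -> u j <= u i.
Proof.
  intros Hij Hj; induction Hij as [| j Hij IH]; [lra |].
  apply Rle_trans with (u j); [apply hu_mono, Hj | apply IH; lia].
Qed.

Lemma gap_bound_nonneg (L : nat) : (L < n + k)%nat -> 0 <= gap_bound f k L u.
Proof.
  induction L as [| L IH]; intros HL.
  - rewrite gap_bound_short by lia; lra.
  - destruct (le_lt_dec k (S L)) as [HkL | HkL]; [| rewrite gap_bound_short by exact HkL; lra].
    rewrite gap_bound_S by exact HkL.
    pose proof (hu_range (S L - k) ltac:(lia)).
    apply Rmult_le_pos; [apply IH; lia | apply hf_range; lra].
Qed.

(* Each window added starts at or before o, so its factor is at least f (1 - u o). *)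
Lemma pow_mul_gap_bound_le (L d o : nat) :
  (L + d - k <= o)%nat -> (o < n)%nat ->
  f (1 - u o) ^ d * gap_bound f k L u <= gap_bound f k (L + d) u.
Proof.
  intros Hd Ho; pose proof (hu_range o Ho).
  pose proof (hf_range (1 - u o) ltac:(lra)) as Hlam.
  induction d as [| d IH].
  - rewrite Nat.add_0_r; simpl; lra.
  - rewrite Nat.add_succ_r; simpl.
    apply Rle_trans with (f (1 - u o) * gap_bound f k (L + d) u).
    { rewrite Rmult_assoc; apply Rmult_le_compat_l; [lra | apply IH; lia]. }
    pose proof (gap_bound_nonneg (L + d) ltac:(lia)).
    destruct (le_lt_dec k (S (L + d))) as [HkL | HkL].
    + rewrite gap_bound_S by exact HkL; rewrite Rmult_comm.
      apply Rmult_le_compat_l; [assumption |].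
      pose proof (u_antimono (S (L + d) - k) o ltac:(lia) Ho).
      pose proof (hu_range (S (L + d) - k) ltac:(lia)).
      apply (f_antimono f hf_dec); lra.
    + rewrite !gap_bound_short by lia; lra.
Qed.

Definition padded_bound (L : nat) : Prop :=
  forall c, (c < k)%nat -> (k <= L + c)%nat ->
  f (1 - u (L + c - k)%nat) ^ k * prob_no_kgap_padded k L c u
  <= rho f (1 - u (L + c - k)%nat) (k - c) * gap_bound f k (L + c) u.

Lemma prob_no_kgap_le_of_padded_bound (L : nat) :
  (L <= n)%nat -> padded_bound L -> prob_no_kgap_padded k L 0 u <= gap_bound f k L u.
Proof.
  intros HL Hpad.
  destruct (le_lt_dec k L) as [HkL | HkL].
  2: { rewrite prob_no_kgap_padded_short, gap_bound_short by lia; lra. }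
  specialize (Hpad 0%nat hk ltac:(lia)); rewrite Nat.add_0_r, Nat.sub_0_r in Hpad.
  set (Q := 1 - u (L - k)%nat) in Hpad.
  assert (HQ : 0 <= Q <= 1) by (pose proof (hu_range (L - k) ltac:(lia)); unfold Q; lra).
  pose proof (gap_bound_nonneg L ltac:(lia)) as HB.
  destruct (Rle_lt_or_eq_dec 0 (f Q) (proj1 (hf_range Q HQ))) as [Hpos | Hf0].
  - apply (Rmult_le_reg_l (f Q ^ k)); [apply pow_lt, Hpos |].
    apply Rle_trans with (1 := Hpad), Rmult_le_compat_r; [exact HB |].
    apply rho_k_le; assumption.
  - (* f Q = 0 forces Q = 1: the last k events surely fail *)
    pose proof (f_eq_0 k f hk hf_range hf_dec hf_eq Q HQ (eq_sym Hf0)) as HQ1.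
    rewrite prob_no_kgap_padded_sure_gap; [exact HB | lia |].
    intros i Hi; pose proof (u_antimono (L - k) i ltac:(lia) ltac:(lia)).
    pose proof (hu_range i ltac:(lia)); unfold Q in HQ1; lra.
Qed.

Lemma padded_bound_holds (L : nat) : (L <= n)%nat -> padded_bound L.
Proof.
  induction L as [| L IH]; intros HL c Hc HkL; [lia |].
  specialize (IH ltac:(lia)).
  pose proof (prob_no_kgap_le_of_padded_bound L ltac:(lia) IH) as Hfresh.
  set (o := (S L + c - k)%nat).
  assert (Ho : (o <= L)%nat) by (unfold o; lia).
  set (Q := 1 - u o); set (lam := f Q); set (j := (k - S c)%nat).
  assert (HQ : 0 <= Q <= 1) by (pose proof (hu_range o ltac:(lia)); unfold Q; lra).
  assert (Hlam : 0 <= lam <= 1) by (apply hf_range, HQ).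
  assert (HuL : 0 <= u L <= 1 - Q).
  { pose proof (u_antimono o L Ho ltac:(lia)); pose proof (hu_range L ltac:(lia)); unfold Q; lra. }
  assert (Hrho : rho f Q j <= lam ^ j) by (apply (rho_le_pow k f); auto; unfold j; lia).
  assert (HB : 0 <= gap_bound f k (S L + c) u) by (apply gap_bound_nonneg; lia).
  assert (Hgrow : lam ^ S c * gap_bound f k L u <= gap_bound f k (S L + c) u).
  { replace (S L + c)%nat with (L + S c)%nat by lia.
    apply pow_mul_gap_bound_le; unfold o in *; lia. }
  assert (Hrun : lam ^ k * prob_no_kgap_padded k L (S c) u <= rho f Q j * gap_bound f k (S L + c) u).
  { destruct (Nat.eq_dec (S c) k) as [Hend | Hmid].
    - rewrite prob_no_kgap_padded_long by lia.
      replace j with 0%nat by (unfold j; lia); rewrite rho_0; lra.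
    - pose proof (IH (S c) ltac:(lia) ltac:(lia)) as Hnext.
      replace (L + S c)%nat with (S L + c)%nat in Hnext by lia; exact Hnext. }
  replace (k - c)%nat with (S j) by (unfold j; lia).
  rewrite prob_no_kgap_padded_S, rho_S by exact Hc; fold o Q lam.
  replace (lam ^ k) with (lam ^ j * lam ^ S c) in Hrun |- *
    by (rewrite <- pow_add; f_equal; unfold j; lia).
  assert (Hlamc : 0 <= lam ^ S c) by (apply pow_le; lra).
  assert (Hfirst : lam ^ j * lam ^ S c * prob_no_kgap_padded k L 0 u
                   <= lam ^ j * gap_bound f k (S L + c) u).
  { rewrite Rmult_assoc; apply Rmult_le_compat_l; [apply pow_le; lra |].
    apply Rle_trans with (2 := Hgrow), Rmult_le_compat_l; assumption. }
  set (fresh := prob_no_kgap_padded k L 0 u) in *; set (run := prob_no_kgap_padded k L (S c) u) in *.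
  replace (lam ^ j * lam ^ S c * (u L * fresh + (1 - u L) * run))
    with (u L * (lam ^ j * lam ^ S c * fresh) + (1 - u L) * (lam ^ j * lam ^ S c * run)) by ring.
  apply affine_mix_le; auto; lra.
Qed.

End GapBound.

Theorem mainTheorem4 (k n : nat) (u : nat -> R) (f : R -> R)
  (hk : (1 <= k)%nat)
  (hf_range : forall x, 0 <= x <= 1 -> 0 <= f x <= 1)
  (hf_dec : forall x y, 0 <= x -> x < y -> y <= 1 -> f y < f x)
  (hf_eq : forall x, 0 <= x <= 1 -> f x ^ k - f x ^ (S k) = x ^ k - x ^ (S k))
  (hu_range : forall i, (i < n)%nat -> 0 <= u i <= 1)
  (hu_mono : forall i, (S i < n)%nat -> u (S i) <= u i) :
  prob_no_kgap k n u <= gap_bound f k n u.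
Proof.
  rewrite <- prob_no_kgap_padded_0.
  apply (prob_no_kgap_le_of_padded_bound k n u f); auto.
  apply (padded_bound_holds k n u f); auto.
Qed.
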